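(* Let $G=(V,E)$ be a control flow graph and $p$ a predicate node. If $p$ has at most one successor in $A_p$, then there are no nodes $a,b$ that are DOD on $p$.
   Context: A control flow graph (CFG) is a finite directed graph $G=(V,E)$ in which every node has at most two outgoing edges; nodes with exactly two outgoing edges are predicate nodes. A path from $n_1$ is a nonempty finite or infinite sequence $n_1n_2\ldots$ of nodes with each adjacent pair an edge; it is maximal if it is infinite or its last node has no successor. $V_p$ is the set of nodes occurring on all maximal paths from $p$ in $G$. For $V'\subseteq V$, a $V'$-interval from $x$ to $y$ is a finite path $n_1\ldots n_k$ in $G$ with $k\ge 2$, $n_1=x\in V'$, $n_k=y\in V'$, and $n_i\notin V'$ for $1<i<k$. $A_p$ is the directed graph with node set $V_p$ and an edge $(x,y)$ iff there is a $V_p$-interval from $x$ to $y$ in $G$. For three distinct nodes $p,a,b$ with $p$ a predicate node with successors $s_1,s_2$, the nodes $a,b$ are DOD (decisive order-dependent) on $p$ if all maximal paths from $p$ contain both $a$ and $b$, all maximal paths from $s_1$ contain $a$ before any occurrence of $b$, and all maximal paths from $s_2$ contain $b$ before any occurrence of $a$. *)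

From mathcomp Require Import all_boot.
Set Implicit Arguments. Unset Strict Implicit. Unset Printing Implicit Defensive.

Section CFG.
Variables (T : finType) (e : rel T).

Definition succs (x : T) : {set T} := [set y | e x y].

Definition is_cfg : Prop := forall x : T, #|succs x| <= 2.

Definition predicate_node (x : T) : Prop := #|succs x| = 2.

Definition fin_maxpath (n : T) (s : seq T) : Prop :=
  path e n s /\ forall y, ~~ e (last n s) y.

(* An infinite path from n (infinite paths are always maximal). *)
Definition inf_path (n : T) (f : nat -> T) : Prop :=
  f 0 = n /\ forall i, e (f i) (f i.+1).

Definition on_all_maxpaths (n v : T) : Prop :=
  (forall s, fin_maxpath n s -> v \in n :: s) /\
  (forall f, inf_path n f -> exists i, f i = v).

Definition Vp (p : T) (v : T) : Prop := on_all_maxpaths p v.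

(* There is a V_p-interval from x to y: a finite path x :: t ++ [:: y]
   (at least two nodes), x, y in V_p and all inner nodes outside V_p. *)
Definition Vp_interval (p x y : T) : Prop :=
  Vp p x /\ Vp p y /\
  exists t : seq T, path e x (rcons t y) /\ (forall z, z \in t -> ~ Vp p z).

Definition Ap_edge (p x y : T) : Prop := Vp_interval p x y.

Definition before_on_all_maxpaths (n a b : T) : Prop :=
  (forall s, fin_maxpath n s ->
     exists i, i < size (n :: s) /\ nth n (n :: s) i = a /\
               forall j, j <= i -> nth n (n :: s) j != b) /\
  (forall f, inf_path n f ->
     exists i, f i = a /\ forall j, j <= i -> f j <> b).

Definition DOD (p a b : T) : Prop :=
  [/\ p != a, p != b, a != b & predicate_node p] /\
  exists s1 s2 : T,
    s1 != s2 /\ e p s1 /\ e p s2 /\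
    on_all_maxpaths p a /\ on_all_maxpaths p b /\
    before_on_all_maxpaths s1 a b /\
    before_on_all_maxpaths s2 b a.

End CFG.

(* Follow a successor s of p along a maximal path until it first re-enters
   V_p; this happens because a <> p lies on every maximal path from p, and the
   node reached is an A_p-successor of p.  Uniqueness of that successor makes
   both successors of p reach the same node y through nodes outside V_p.
   Extend both prefixes by one common maximal path from y: as a and b lie in
   V_p they occur only in the common part, where the DOD conditions for s1 and
   s2 demand that a come before b and b before a. *)

From mathcomp Require Import all_boot zify.
From Stdlib Require Import Classical.

Set Implicit Arguments.
Unset Strict Implicit.
Unset Printing Implicit Defensive.

Lemma exists_minimal (P : nat -> Prop) n :
  P n -> exists m, P m /\ forall j, j < m -> ~ P j.
Proof.
elim/ltn_ind: n => n IH Pn.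
have [[j lt_jn Pj] | none_below] := classic (exists2 j, j < n & P j).
  exact: IH Pj.
by exists n; split=> // j lt_jn Pj; apply: none_below; exists j.
Qed.

Section OccursBefore.
Variable T : Type.

Definition occurs_before (g : nat -> T) (a b : T) :=
  exists i, g i = a /\ forall j, j <= i -> g j <> b.

Lemma occurs_before_asym g a b : occurs_before g a b -> ~ occurs_before g b a.
Proof.
move=> [i [gi_a no_b]] [j [gj_b no_a]].
have [le_ij | /ltnW le_ji] := leqP i j.
  exact: no_a le_ij gi_a.
exact: no_b le_ji gj_b.
Qed.

End OccursBefore.

Section MaxWalk.
Variables (T : finType) (e : rel T).

Definition is_walk (h : nat -> T) k := forall i, i < k -> e (h i) (h i.+1).

Definition index_in (bound : option nat) i :=
  if bound is Some L then i <= L else true.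

Lemma index_inW bound i j : j <= i -> index_in bound i -> index_in bound j.
Proof. by case: bound => //= L; apply: leq_trans. Qed.

(* A maximal path g 0, g 1, ... : infinite when [bound = None], and ending in
   the dead end g L when [bound = Some L]. *)
Definition maxwalk (n : T) (g : nat -> T) (bound : option nat) :=
  [/\ g 0 = n, forall i, index_in bound i.+1 -> e (g i) (g i.+1)
    & if bound is Some L then forall y, ~~ e (g L) y else True].

Lemma path_mkseq (g : nat -> T) L :
  is_walk g L -> path e (g 0) (mkseq (fun i => g i.+1) L).
Proof.
move=> walk_g; apply/(pathP (g 0)) => i; rewrite size_mkseq => lt_iL.
rewrite nth_mkseq //; case: i lt_iL => [|i] lt_iL /=; first exact: walk_g.
by rewrite nth_mkseq ?walk_g // ltnW.
Qed.

Lemma nth_cons_mkseq n (g : nat -> T) L i :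
  g 0 = n -> i <= L -> nth n (n :: mkseq (fun i => g i.+1) L) i = g i.
Proof. by move=> g0; case: i => [|i] //= lt_iL; rewrite nth_mkseq. Qed.

Lemma maxwalk_fin_maxpath n g L :
  maxwalk n g (Some L) -> fin_maxpath e n (mkseq (fun i => g i.+1) L).
Proof.
case=> g0 edges dead; split.
  by rewrite -g0; apply: path_mkseq => i; apply: edges.
by move=> y; rewrite (last_nth n) size_mkseq nth_cons_mkseq.
Qed.

Lemma maxwalk_inf_path n g : maxwalk n g None -> inf_path e n g.
Proof. by case=> g0 edges _; split=> // i; apply: edges. Qed.

Lemma maxwalk_hits n g bound v :
  maxwalk n g bound -> on_all_maxpaths e n v ->
  exists2 i, index_in bound i & g i = v.
Proof.
case: bound => [L|] walk_g [on_fin on_inf]; last first.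
  by have [i gi_v] := on_inf _ (maxwalk_inf_path walk_g); exists i.
have g0 : g 0 = n by case: walk_g.
have /(nthP n)[i] := on_fin _ (maxwalk_fin_maxpath walk_g).
by rewrite /= size_mkseq ltnS => le_iL; rewrite nth_cons_mkseq //; exists i.
Qed.

Lemma maxwalk_before n g bound a b :
  maxwalk n g bound -> before_on_all_maxpaths e n a b -> occurs_before g a b.
Proof.
case: bound => [L|] walk_g [before_fin before_inf]; last first.
  exact: before_inf _ (maxwalk_inf_path walk_g).
have g0 : g 0 = n by case: walk_g.
have [i [lt_iL [nth_a no_b]]] := before_fin _ (maxwalk_fin_maxpath walk_g).
rewrite /= size_mkseq ltnS in lt_iL.
exists i; split; first by rewrite -(nth_cons_mkseq g0 lt_iL).
move=> j le_ji; rewrite -(nth_cons_mkseq g0 (leq_trans le_ji lt_iL)).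
exact/eqP/no_b.
Qed.

Lemma maxwalk_exists n : exists g bound, maxwalk n g bound.
Proof.
pose next x := odflt x [pick y | e x y]; pose g i := iter i next n.
have next_edge x y : e x y -> e x (next x).
  by rewrite /next; case: pickP => [//|none]; rewrite none.
pose dead x := ~~ [exists y, e x y].
have [[k dead_k] | live] := classic (exists k, dead (g k)); last first.
  exists g, None; split=> // i _.
  have /negPn/existsP[y] : ~~ dead (g i).
    by apply/negP => dead_i; apply: live; exists i.
  exact: next_edge.
have [m dead_m first_dead] := ex_minnP (ex_intro (fun k => dead (g k)) k dead_k).
exists g, (Some m); split=> [//| i /= lt_im |]; last exact/existsPn.
have /negPn/existsP[y] : ~~ dead (g i).
  by apply/negP => /first_dead; rewrite leqNgt lt_im.
exact: next_edge.
Qed.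

Definition splice (h : nat -> T) k (g : nat -> T) i :=
  if i < k then h i else g (i - k).

Lemma splice_lt h k g i : i < k -> splice h k g i = h i.
Proof. by rewrite /splice => ->. Qed.

Lemma splice_ge h k g i : k <= i -> splice h k g i = g (i - k).
Proof. by rewrite /splice ltnNge => ->. Qed.

Lemma maxwalk_splice h k g bound :
  is_walk h k -> maxwalk (h k) g bound ->
  maxwalk (h 0) (splice h k g) (omap (addn k) bound).
Proof.
move=> walk_h [g0 edges dead]; split.
- by case: k walk_h g0 => [|k] _ g0; rewrite /splice /= ?subnn.
- move=> i in_i; case: (ltngtP i.+1 k) => [lt_ik | lt_ki | eq_ik].
  + by rewrite !splice_lt ?walk_h // ltnW.
  + rewrite ltnS in lt_ki.
    rewrite (splice_ge _ _ lt_ki) (splice_ge _ _ (leqW lt_ki)) (subSn lt_ki).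
    by apply: edges; case: bound in_i {dead} => //= L; lia.
  + subst k; rewrite splice_lt // splice_ge // subnn g0; exact: walk_h.
- case: bound {edges} dead => //= L dead y.
  by rewrite splice_ge ?leq_addr // addKn.
Qed.

Lemma Vp_self p : Vp e p p.
Proof. by split=> [s _ | f [f0 _]]; [exact: mem_head | exists 0]. Qed.

Lemma Ap_edge_via_succ p s a :
  e p s -> p != a -> Vp e p a ->
  exists h k, [/\ h 0 = s, is_walk h k, forall i, i < k -> ~ Vp e p (h i)
                & Ap_edge e p p (h k)].
Proof.
move=> e_ps neq_pa Vp_a.
have [r [bound walk_r]] := maxwalk_exists s.
pose h0 i := if i is 0 then p else s.
have walk_W : maxwalk p (splice h0 1 r) (omap (addn 1) bound).
  by apply: (maxwalk_splice (h := h0)) => // [[|]].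
set W := splice h0 1 r in walk_W; set bound' := omap (addn 1) bound in walk_W.
have [i in_i Wi_a] := maxwalk_hits walk_W Vp_a.
have i_gt0 : 0 < i.
  by case: i in_i Wi_a => // _ W0_a; rewrite -W0_a eqxx in neq_pa.
pose returns m := index_in bound' m.+1 /\ Vp e p (W m.+1).
have /exists_minimal[m [[in_m Vp_m] first_Vp]] : returns i.-1.
  by rewrite /returns prednK // Wi_a.
have walk_m : is_walk W m.+1.
  by move=> j lt_jm; case: walk_W => _ edges _; apply/edges/(index_inW lt_jm).
have outside_Vp j : j < m -> ~ Vp e p (W j.+1).
  move=> lt_jm Vp_j; apply: (first_Vp j lt_jm); split=> //.
  by apply: index_inW in_m; rewrite ltnS ltnW.
exists (fun j => W j.+1), m; split.
- by rewrite /W splice_ge // subnn; case: walk_r.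
- by move=> j lt_jm; apply: walk_m; rewrite ltnS.
- exact: outside_Vp.
split; [exact: Vp_self | split; first exact: Vp_m].
exists (mkseq (fun j => W j.+1) m); split.
  by rewrite -mkseqS -[p]/(W 0); apply: path_mkseq.
by move=> z /mapP[j]; rewrite mem_iota add0n => /andP[_ /outside_Vp] + ->.
Qed.

Lemma occurs_before_after_Vp_free p h k g bound a b :
  is_walk h k -> (forall i, i < k -> ~ Vp e p (h i)) -> maxwalk (h k) g bound ->
  Vp e p a -> before_on_all_maxpaths e (h 0) a b -> occurs_before g a b.
Proof.
move=> walk_h free walk_g Vp_a before.
have [i [Wi_a no_b]] := maxwalk_before (maxwalk_splice walk_h walk_g) before.
have le_ki : k <= i.
  rewrite leqNgt; apply/negP => lt_ik; apply: (free i lt_ik).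
  by rewrite -(splice_lt h g lt_ik) Wi_a.
exists (i - k); split; first by rewrite -(splice_ge h g le_ki).
move=> j le_j; rewrite -(addnK k j) -(splice_ge h g (leq_addl j k)).
by apply: no_b; lia.
Qed.

End MaxWalk.

Theorem lemma4p5 (T : finType) (e : rel T) (p : T) :
  is_cfg e -> predicate_node e p ->
  (forall y1 y2 : T, Ap_edge e p p y1 -> Ap_edge e p p y2 -> y1 = y2) ->
  ~ (exists a b : T, DOD e p a b).
Proof.
move=> _ _ Ap_uniq [a [b [[neq_pa neq_pb _ _]
  [s1 [s2 [_ [e_ps1 [e_ps2 [Vp_a [Vp_b [before1 before2]]]]]]]]]]].
have [h1 [k1 [h1_0 walk1 free1 Ap1]]] := Ap_edge_via_succ e_ps1 neq_pa Vp_a.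
have [h2 [k2 [h2_0 walk2 free2 Ap2]]] := Ap_edge_via_succ e_ps2 neq_pb Vp_b.
have [g [bound walk_g]] := maxwalk_exists e (h1 k1).
have before_ab : occurs_before g a b.
  by apply: (occurs_before_after_Vp_free walk1 free1 walk_g Vp_a); rewrite h1_0.
have before_ba : occurs_before g b a.
  rewrite -(Ap_uniq _ _ Ap2 Ap1) in walk_g.
  by apply: (occurs_before_after_Vp_free walk2 free2 walk_g Vp_b); rewrite h2_0.
exact: occurs_before_asym before_ab before_ba.
Qed.
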